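(* Let $F,W,r,\sigma_0^2,\eta,P_c,P_{\max}>0$ and $\alpha>0$. Consider the problem \[ \min_{P_t}\ \frac{F}{W\log_2\!\left(1+\frac{P_t r^{-\alpha}}{\sigma_0^2}\right)}\left(\frac{1}{\eta}P_t+P_c\right)\quad\text{s.t.}\quad 0<P_t\le P_{\max}. \] Denote $y=1+P_t\frac{r^{-\alpha}}{\sigma_0^2}$, $y_0=1+P_{\max}\frac{r^{-\alpha}}{\sigma_0^2}$, and $\varepsilon=\frac{r^{-\alpha}\eta P_c}{\sigma_0^2}-1$. If $\left(\frac{y_0}{e}\right)^{y_0}<2^{\varepsilon/\ln 2}$, then the optimal solution is $P_t^*=P_{\max}$. Otherwise, the optimal solution $P_t^*$ satisfies $\left(\frac{y}{e}\right)^{y}=2^{\varepsilon/\ln 2}$ with $y=1+P_t^*\frac{r^{-\alpha}}{\sigma_0^2}$.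
   Context: Interpretation: the objective is the (approximate) energy consumed by a D2D transmitter to send a file of $F$ bits over a link of distance $r$ with bandwidth $W$, path-loss exponent $\alpha$, noise-plus-interference variance $\sigma_0^2$, power amplifier efficiency $\eta$, circuit power $P_c$, and transmit power $P_t$ bounded by $P_{\max}$. *)

From Stdlib Require Import Reals.
Open Scope R_scope.

Definition log2 (x : R) : R := ln x / ln 2.

Definition energy (F W r alpha sigma02 eta Pc Pt : R) : R :=
  F / (W * log2 (1 + Pt * Rpower r (- alpha) / sigma02)) * (/ eta * Pt + Pc).

Definition is_optimal (F W r alpha sigma02 eta Pc Pmax Pt : R) : Prop :=
  0 < Pt <= Pmax /\
  forall Q, 0 < Q <= Pmax ->
    energy F W r alpha sigma02 eta Pc Pt <= energy F W r alpha sigma02 eta Pc Q.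

(* With y = 1 + SNR, the energy is a positive multiple of (y + eps) / ln y on
   y > 1.  The tangent-line bound on ln shows that this cost strictly decreases
   to the left of any y where y ln y - y - eps <= 0 and strictly increases to
   the right of any y where it is >= 0.  That function starts at -1 - eps < 0
   at y = 1, and the hypothesis (y0/e)^y0 < 2^(eps/ln 2) says exactly that it
   is still negative at y0: then Pmax is the unique minimiser; otherwise it
   vanishes at some ys in (1, y0], which is the unique minimiser. *)

From Stdlib Require Import Reals Lra Ranalysis5.
Open Scope R_scope.

Lemma ln_lt_tangent a b : 0 < a -> 0 < b -> a <> b -> ln b < ln a + (b - a) / a.
Proof.
  intros Ha Hb Hab.
  assert (Hne : ln b - ln a <> 0).
  { intro E. apply Hab, ln_inv; lra. }
  assert (Hexp : exp (ln b - ln a) * a = b).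
  { rewrite <- (exp_ln a Ha) at 2. rewrite <- exp_plus.
    replace (ln b - ln a + ln a) with (ln b) by ring. now apply exp_ln. }
  pose proof (exp_ineq1 _ Hne) as Htan.
  apply (Rmult_lt_compat_r a) in Htan; [|exact Ha].
  rewrite Hexp in Htan.
  replace (ln a + (b - a) / a) with (ln a + b / a - 1) by (field; lra).
  apply (Rmult_lt_reg_r a); [exact Ha|].
  replace ((ln a + b / a - 1) * a) with (ln a * a + b - a) by (field; lra).
  lra.
Qed.

Lemma ln_gt0 y : 1 < y -> 0 < ln y.
Proof. intros Hy. rewrite <- ln_1. apply ln_increasing; lra. Qed.

(* [y (ln y)^2 cost' y = crit e y], whence the role of [crit] below. *)
Definition cost (e y : R) : R := (y + e) / ln y.
Definition crit (e y : R) : R := y * ln y - y - e.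

Lemma cost_lt_of_crit e a b :
  -1 < e -> 1 < a -> 1 < b -> a <> b -> 0 <= (b - a) * crit e a ->
  cost e a < cost e b.
Proof.
  intros He Ha Hb Hab Hcrit. unfold cost, crit in *.
  pose proof (ln_gt0 _ Ha) as Hla. pose proof (ln_gt0 _ Hb) as Hlb.
  assert (Htan : (a + e) * ln b < (a + e) * (ln a + (b - a) / a)).
  { apply Rmult_lt_compat_l; [lra|]. apply ln_lt_tangent; lra. }
  assert (Hsplit : (a + e) * (ln a + (b - a) / a)
                   = (b + e) * ln a - (b - a) * (a * ln a - a - e) / a)
    by (field; lra).
  assert (Hnonneg : 0 <= (b - a) * (a * ln a - a - e) / a)
    by (apply Rmult_le_pos; [lra | left; apply Rinv_0_lt_compat; lra]).
  apply (Rmult_lt_reg_r (ln a * ln b)); [nra|].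
  replace ((a + e) / ln a * (ln a * ln b)) with ((a + e) * ln b) by (field; lra).
  replace ((b + e) / ln b * (ln a * ln b)) with ((b + e) * ln a) by (field; lra).
  lra.
Qed.

Lemma crit_continuous e y : 0 < y -> continuity_pt (crit e) y.
Proof.
  intros Hy. apply derivable_continuous_pt.
  exists (1 * ln y + y * / y - 1 - 0). unfold crit.
  apply (derivable_pt_lim_minus (fun y => y * ln y - y) (fun _ => e));
    [|apply derivable_pt_lim_const].
  apply (derivable_pt_lim_minus (fun y => y * ln y) id); [|apply derivable_pt_lim_id].
  apply (derivable_pt_lim_mult id ln);
    [apply derivable_pt_lim_id | now apply derivable_pt_lim_ln].
Qed.

Lemma crit_root e y0 : -1 < e -> 1 < y0 -> 0 <= crit e y0 ->
  exists y, 1 < y <= y0 /\ crit e y = 0.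
Proof.
  intros He Hy0 [Hpos | Hzero]; [|now exists y0; split; [lra|]].
  assert (Hcrit1 : crit e 1 < 0) by (unfold crit; rewrite ln_1; lra).
  destruct (IVT_interv (crit e) 1 y0) as [y [[Hy1 Hy2] Hy]]; auto.
  { intros a Ha. apply crit_continuous. lra. }
  exists y. split; [|exact Hy]. split; [|exact Hy2].
  destruct Hy1 as [|<-]; [assumption | lra].
Qed.

Lemma Rpower_div_exp1 y : 0 < y -> Rpower (y / exp 1) y = exp (y * ln y - y).
Proof.
  intros Hy. unfold Rpower, Rdiv.
  rewrite ln_mult, ln_Rinv, ln_exp by (try apply Rinv_0_lt_compat; auto using exp_pos).
  f_equal. ring.
Qed.

Lemma Rpower_2_div_ln2 e : Rpower 2 (e / ln 2) = exp e.
Proof.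
  unfold Rpower. f_equal. pose proof ln_lt_2. field. lra.
Qed.

Lemma condition_lt_iff e y : 0 < y ->
  Rpower (y / exp 1) y < Rpower 2 (e / ln 2) <-> crit e y < 0.
Proof.
  intros Hy. rewrite Rpower_div_exp1, Rpower_2_div_ln2 by assumption. unfold crit.
  split; intros H.
  - apply exp_lt_inv in H. lra.
  - apply exp_increasing. lra.
Qed.

Lemma condition_eq_of_crit e y : 0 < y -> crit e y = 0 ->
  Rpower (y / exp 1) y = Rpower 2 (e / ln 2).
Proof.
  intros Hy Hcrit. rewrite Rpower_div_exp1, Rpower_2_div_ln2 by assumption.
  unfold crit in Hcrit. f_equal. lra.
Qed.

Lemma affine_level_attained g Pmax ys : 0 < g -> 1 < ys <= 1 + Pmax * g ->
  exists P, 0 < P <= Pmax /\ 1 + P * g = ys.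
Proof.
  intros Hg Hys. exists ((ys - 1) / g). split; [split|].
  - apply Rdiv_lt_0_compat; lra.
  - apply (Rmult_le_reg_r g); [exact Hg|].
    replace ((ys - 1) / g * g) with (ys - 1) by (field; lra). lra.
  - field. lra.
Qed.

Section Energy.

Variables F W r alpha sigma02 eta Pc Pmax : R.
Hypotheses (hF : 0 < F) (hW : 0 < W) (hs : 0 < sigma02) (heta : 0 < eta)
  (hPc : 0 < Pc).

Local Notation gain := (Rpower r (- alpha) / sigma02).
Local Notation y P := (1 + P * gain).
Local Notation eps := (Rpower r (- alpha) * eta * Pc / sigma02 - 1).
Local Notation E := (energy F W r alpha sigma02 eta Pc).
Local Notation optimal := (is_optimal F W r alpha sigma02 eta Pc Pmax).

Lemma gain_gt0 : 0 < gain.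
Proof. apply Rdiv_lt_0_compat; [apply exp_pos | exact hs]. Qed.

Lemma eps_gt_m1 : -1 < eps.
Proof.
  enough (0 < Rpower r (- alpha) * eta * Pc / sigma02) by lra.
  apply Rdiv_lt_0_compat; [|exact hs].
  repeat apply Rmult_lt_0_compat; [apply exp_pos | exact heta | exact hPc].
Qed.

Lemma energy_eq_cost P : 0 < P ->
  E P = F * ln 2 / (W * gain * eta) * cost eps (y P).
Proof.
  intros HP. unfold energy, cost, log2.
  pose proof gain_gt0 as Hg. pose proof ln_lt_2.
  assert (Hpow : 0 < Rpower r (- alpha)) by apply exp_pos.
  assert (Hln : 0 < ln (y P)) by (apply ln_gt0; nra).
  replace (1 + P * Rpower r (- alpha) / sigma02) with (y P) by (field; lra).
  field. repeat split; lra.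
Qed.

Lemma energy_lt_of_cost_lt P Q : 0 < P -> 0 < Q ->
  cost eps (y P) < cost eps (y Q) -> E P < E Q.
Proof.
  intros HP HQ Hlt. rewrite !energy_eq_cost by assumption.
  apply Rmult_lt_compat_l; [|exact Hlt].
  pose proof gain_gt0. pose proof ln_lt_2.
  apply Rdiv_lt_0_compat; [apply Rmult_lt_0_compat; lra|].
  apply Rmult_lt_0_compat; [apply Rmult_lt_0_compat|]; assumption.
Qed.

Lemma energy_lt_of_crit P Q : 0 < P -> 0 < Q -> P <> Q ->
  0 <= (Q - P) * crit eps (y P) -> E P < E Q.
Proof.
  intros HP HQ HPQ Hsign. pose proof gain_gt0 as Hg.
  apply energy_lt_of_cost_lt; [exact HP | exact HQ |].
  apply cost_lt_of_crit; [apply eps_gt_m1 | nra | nra | |].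
  - intros Hy. apply HPQ. nra.
  - replace (y Q - y P) with ((Q - P) * gain) by ring. nra.
Qed.

Lemma strict_minimizer_optimal P : 0 < P <= Pmax ->
  (forall Q, 0 < Q <= Pmax -> Q <> P -> E P < E Q) ->
  optimal P /\ forall Pt, optimal Pt -> Pt = P.
Proof.
  intros HP Hmin. split.
  - split; [exact HP|]. intros Q HQ.
    destruct (Req_dec Q P) as [-> | HQP]; [lra|].
    left. now apply Hmin.
  - intros Pt [HPt Hopt]. destruct (Req_dec Pt P) as [| HPtP]; [assumption|].
    pose proof (Hmin Pt HPt HPtP). pose proof (Hopt P HP). lra.
Qed.

End Energy.

Theorem proposition2 (F W r sigma02 eta Pc Pmax alpha : R)
  (hF : 0 < F) (hW : 0 < W) (hr : 0 < r) (hs : 0 < sigma02) (heta : 0 < eta)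
  (hPc : 0 < Pc) (hPmax : 0 < Pmax) (halpha : 0 < alpha) :
  let y_of := fun Pt => 1 + Pt * (Rpower r (- alpha) / sigma02) in
  let y0 := y_of Pmax in
  let eps := Rpower r (- alpha) * eta * Pc / sigma02 - 1 in
  (Rpower (y0 / exp 1) y0 < Rpower 2 (eps / ln 2) ->
     is_optimal F W r alpha sigma02 eta Pc Pmax Pmax /\
     forall Pt, is_optimal F W r alpha sigma02 eta Pc Pmax Pt -> Pt = Pmax) /\
  (~ (Rpower (y0 / exp 1) y0 < Rpower 2 (eps / ln 2)) ->
     (exists Pt, is_optimal F W r alpha sigma02 eta Pc Pmax Pt) /\
     forall Pt, is_optimal F W r alpha sigma02 eta Pc Pmax Pt ->
       Rpower (y_of Pt / exp 1) (y_of Pt) = Rpower 2 (eps / ln 2)).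
Proof.
  intros y_of y0 eps.
  pose proof (gain_gt0 r alpha sigma02 hs) as Hg.
  assert (Hy0 : 1 < y0) by (unfold y0, y_of; nra).
  split; intros Hcond.
  - apply condition_lt_iff in Hcond; [|lra].
    apply strict_minimizer_optimal; [lra|]. intros Q HQ HQne.
    apply energy_lt_of_crit; try lra. change (0 <= (Q - Pmax) * crit eps y0). nra.
  - assert (Hcrit0 : 0 <= crit eps y0).
    { apply Rnot_lt_le. now rewrite <- condition_lt_iff by lra. }
    destruct (crit_root eps y0 (eps_gt_m1 r alpha sigma02 eta Pc hs heta hPc) Hy0 Hcrit0)
      as [ys [Hys Hcrit]].
    destruct (affine_level_attained _ Pmax ys Hg Hys) as [Ps [HPs HyPs]].
    fold (y_of Ps) in HyPs.
    destruct (strict_minimizer_optimal F W r alpha sigma02 eta Pc Pmax Ps HPs)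
      as [Hopt Hunique].
    { intros Q HQ HQne. apply energy_lt_of_crit; try lra.
      change (0 <= (Q - Ps) * crit eps (y_of Ps)). rewrite HyPs, Hcrit. lra. }
    split; [now exists Ps|].
    intros Pt HPt. rewrite (Hunique Pt HPt), HyPs.
    apply condition_eq_of_crit; [lra | exact Hcrit].
Qed.
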